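(* Let $n$ and $a$ be coprime positive integers. For every integer $k$ define $\pi_k\in S(\mathbb{Z}_n)$ by $\pi_k(x)=ax+k$. Then $\mathrm{cyc}(\pi_k)\leq\mathrm{cyc}(\pi_0)$ for every integer $k$.
   Context: $S(\mathbb{Z}_n)$ is the set of bijections $\mathbb{Z}_n\to\mathbb{Z}_n$; $\mathrm{cyc}(\pi)$ is the number of cycles (including fixed points) in the cycle decomposition of $\pi$. *)

From mathcomp Require Import all_boot all_order all_fingroup all_algebra.
Set Implicit Arguments. Unset Strict Implicit. Unset Printing Implicit Defensive.
Import Order.TTheory GRing.Theory Num.Theory.
Local Open Scope ring_scope.

(* Z_n is modelled by 'I_n (residues 0..n-1), which is correct for every n >= 1
   (unlike 'Z_n, which is Z/2 for n = 1). *)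

Definition cyc (T : finType) (s : {perm T}) : nat := #|porbits s|.

Lemma affine_lt (n : nat) (x : 'I_n) (m : int) : (`|(m %% n)%Z|%N < n)%N.
Proof.
have n0 : (0 < n)%N by apply: leq_ltn_trans (ltn_ord x).
have nz : (n%:Z != 0) by rewrite eqz_nat -lt0n.
have h1 := modz_ge0 m nz.
have h2 : (m %% n)%Z < n%:Z by apply: ltz_pmod; rewrite ltz_nat.
by rewrite -ltz_nat gez0_abs.
Qed.

(* x |-> a x + k  (mod n) on Z_n = 'I_n *)
Definition affine_fun (n a : nat) (k : int) (x : 'I_n) : 'I_n :=
  Ordinal (affine_lt x ((a * x)%N%:Z + k)%R).

Lemma affine_inj (n a : nat) (k : int) : coprime a n -> injective (@affine_fun n a k).
Proof.
move=> co x y /(congr1 val) /= E.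
have n0 : (0 < n)%N by apply: leq_ltn_trans (ltn_ord x).
have nz : (n%:Z != 0) by rewrite eqz_nat -lt0n.
have E' : (((a * x)%N%:Z + k)%R %% n)%Z = (((a * y)%N%:Z + k)%R %% n)%Z.
  by rewrite -[LHS]gez0_abs ?modz_ge0 // -[RHS]gez0_abs ?modz_ge0 // E.
have : ((a * x)%N%:Z == (a * y)%N%:Z %[mod n])%Z.
  by rewrite -(eqz_modDr k); apply/eqP.
rewrite eqz_mod_dvd !PoszM -mulrBr Gauss_dvdzr; last first.
  by rewrite coprimez_sym coprimezE /= .
rewrite -eqz_mod_dvd modz_small ?modz_small ?lez_nat ?ltz_nat ?ltn_ord //.
by move/eqP => [] /val_inj.
Qed.

Definition affine_perm (n a : nat) (k : int) (co : coprime a n) : {perm 'I_n} :=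
  perm (@affine_inj n a k co).

From mathcomp Require Import all_boot all_order all_fingroup all_algebra.
From mathcomp Require Import burnside_app.
Import GRing.Theory.

(* Burnside's lemma for the cyclic group generated by a permutation s gives
   cyc s * m = sum_(j < m) #fix(s^j) for every multiple m of the order of s,
   so it suffices to compare fixed points of powers. The power pi_k^j is
   x |-> a^j x + c_j, whose fixed points, when there are any, form a translate
   of the fixed points of the additive map pi_0^j : x |-> a^j x. *)

Set Implicit Arguments.
Unset Strict Implicit.
Unset Printing Implicit Defensive.

Lemma sum_nat_periodic (F : nat -> nat) (d c : nat) :
  (forall j, F (j + d) = F j) ->
  \sum_(j < c * d) F j = c * \sum_(j < d) F j.
Proof.
move=> Fd; have Fkd k j : F (j + k * d) = F j.
  by elim: k => [|k IHk]; rewrite ?mul0n ?addn0 // mulSn addnCA addnC Fd.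
rewrite -!(big_mkord xpredT F) big_nat_mul -[c in RHS]subn0 -sum_nat_const_nat.
apply: eq_bigr => k _; rewrite -{1}[k * d]add0n big_addn mulSn addnK.
exact: eq_bigr.
Qed.

Section CyclesOfPermutation.
Local Open Scope group_scope.
Variable T : finType.
Implicit Types s t : {perm T}.

Lemma cyc_mul_order s :
  (cyc s * #[s] = \sum_(j < #[s]) #|'Fix_'P[s ^+ j]|)%N.
Proof.
have uniq_s : uniq (traject ( *%g s) 1 #[s]).
  by apply/card_uniqP; rewrite size_traject -(eq_card (cycle_traject s)).
have -> : \sum_(j < #[s]) #|'Fix_'P[s ^+ j]|
          = \sum_(g <- traject ( *%g s) 1 #[s]) #|'Fix_'P[g]|.
  rewrite (big_nth 1) size_traject big_mkord.
  by apply: eq_bigr => j _; rewrite nth_traject // expgnE Monoid.iteropE.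
rewrite -(burnside_formula _ _ uniq_s (fsym (cycle_traject s))).
rewrite size_traject /cyc /porbits.
congr (_ * _)%N; apply: eq_card => y; rewrite porbitE.
by apply/imsetP/imsetP => -[x _ ->]; exists x.
Qed.

Lemma cyc_mul_dvd_order s m : (#[s] %| m)%N ->
  (cyc s * m = \sum_(j < m) #|'Fix_'P[s ^+ j]|)%N.
Proof.
case/dvdnP=> c ->; rewrite mulnCA cyc_mul_order.
rewrite (@sum_nat_periodic (fun j => #|'Fix_'P[s ^+ j]|)) // => j.
by rewrite expgD expg_order mulg1.
Qed.

Lemma cyc_le_afix s t :
  (forall j, #|'Fix_'P[s ^+ j]| <= #|'Fix_'P[t ^+ j]|) -> cyc s <= cyc t.
Proof.
move=> le_afix; have m_gt0 : 0 < #[s] * #[t] by rewrite muln_gt0 !order_gt0.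
rewrite -(leq_pmul2r m_gt0) (cyc_mul_dvd_order (dvdn_mulr #[t] (dvdnn #[s]))).
rewrite (cyc_mul_dvd_order (dvdn_mull #[s] (dvdnn #[t]))).
by apply: leq_sum => j _.
Qed.

End CyclesOfPermutation.

Section AffinePermutations.
Local Open Scope group_scope.
Local Open Scope ring_scope.
Variable V : finZmodType.
Implicit Types (f : V -> V) (s t u v : {perm V}).

Lemma morphB_morphD f : {morph f : x y / x - y} -> {morph f : x y / x + y}.
Proof.
move=> fB x y; have f0 : f 0 = 0 by rewrite -{1}(subrr 0) fB subrr.
have fN z : f (- z) = - f z by rewrite -sub0r fB f0 sub0r.
by rewrite -{1}[y]opprK fB fN opprK.
Qed.

Lemma expg_morphB t j :
  {morph t : x y / x - y} -> {morph (t ^+ j)%g : x y / x - y}.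
Proof.
move=> tB; elim: j => [|j IHj] x y; first by rewrite !expg0 !perm1.
by rewrite expgSr !permM IHj tB.
Qed.

Lemma expg_affine s t j x :
  {morph t : x y / x - y} -> (forall x, s x = t x + s 0) ->
  (s ^+ j)%g x = (t ^+ j)%g x + (s ^+ j)%g 0.
Proof.
move=> tB sE; elim: j x => [|j IHj] x; first by rewrite !expg0 !perm1 addr0.
by rewrite !expgSr !permM IHj sE (morphB_morphD tB) -addrA -sE.
Qed.

Lemma card_afix_affine_le u v :
  {morph v : x y / x - y} -> (forall x, u x = v x + u 0) ->
  (#|'Fix_'P[u]| <= #|'Fix_'P[v]|)%N.
Proof.
move=> vB uE; have vE y : v y = u y - u 0 by rewrite uE addrK.
case: (set_0Vmem 'Fix_'P[u]) => [-> | [x0 /afix1P ux0]].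
  by rewrite cards0.
rewrite -(card_imset _ (subIr x0)); apply/subset_leq_card/subsetP.
move=> _ /imsetP[x /afix1P ux ->].
apply/afix1P; move: ux0 ux; rewrite /= !apermE vB !vE => -> ->.
by rewrite opprB addrA subrK.
Qed.

Theorem cyc_affine_le s t :
  {morph t : x y / x - y} -> (forall x, s x = t x + s 0) ->
  (cyc s <= cyc t)%N.
Proof.
move=> tB sE; apply: cyc_le_afix => j.
apply: card_afix_affine_le => [|x]; first exact: expg_morphB.
exact: expg_affine.
Qed.
End AffinePermutations.

Section AffineModN.
Local Open Scope ring_scope.
Variables (n a : nat) (co : coprime a n.+1).

Lemma affine_perm_val k (x : 'I_n.+1) :
  (affine_perm k co x : nat)%:Z = (((a * x)%N%:Z + k) %% n.+1)%Z.
Proof. by rewrite permE /= gez0_abs ?modz_ge0. Qed.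

Lemma affine_perm0E x : affine_perm 0 co x = x *+ a.
Proof.
apply: val_inj; apply/eqP.
rewrite -eqz_nat affine_perm_val Zp_mulrn /= modz_nat.
by rewrite addn0 mulnC.
Qed.

Lemma affine_permE k x :
  affine_perm k co x = affine_perm 0 co x + affine_perm k co 0.
Proof.
apply: val_inj; apply/eqP; rewrite -eqz_nat /= -modz_nat PoszD !affine_perm_val.
by rewrite muln0 add0r modzDml modzDmr addr0.
Qed.
End AffineModN.

Theorem lemma3p2 (n a : nat) (hn : (0 < n)%N) (ha : (0 < a)%N)
  (co : coprime a n) (k : int) :
  (cyc (affine_perm k co) <= cyc (affine_perm 0 co))%N.
Proof.
case: n hn co => // n _ co.
apply: cyc_affine_le => [x y|x]; last exact: affine_permE.
by rewrite !affine_perm0E mulrnBl.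
Qed.
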